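(* Let $a\in \mathcal{A}$. Then $a\in \mathcal{A}^{\mathrm{gcEP}}$ if and only if (1) $a\in \mathcal{A}^d$; and (2) there exists a unique projection $q\in \mathcal{A}$ such that $\ell(a^d)=\ell(q)$.
   Context: $\mathcal{A}$ is a complex Banach *-algebra with identity; a projection is $q$ with $q=q^2=q^*$. $\mathcal{A}^d$ is the set of generalized Drazin invertible elements, with $a^d$ the generalized Drazin inverse ($a(a^d)^2=a^d$, $aa^d=a^da$, $a-a^2a^d$ quasinilpotent). $\mathcal{A}^{\mathrm{gcEP}}$ is the set of $a$ for which there is $x\in\mathcal{A}$ with $x=ax^2$, $(ax)^*=ax$, $\lim_{n\to\infty}\|a^n-xa^{n+1}\|^{1/n}=0$ (generalized core-EP invertible elements). $\ell(\cdot)$ denotes the left annihilator. *)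

From HB Require Import structures.
From mathcomp Require Import all_boot all_order all_algebra.
From mathcomp Require Import all_classical all_reals all_analysis.
From mathcomp Require Import complex.

Set Implicit Arguments.
Unset Strict Implicit.
Unset Printing Implicit Defensive.

Import Order.TTheory GRing.Theory Num.Theory.
Import numFieldNormedType.Exports.
Local Open Scope ring_scope.
Local Open Scope complex_scope.
Local Open Scope classical_set_scope.

(* A : completeNormedModType (complex R) is a complex Banach space.
   The record below equips it with a unital associative bilinear
   multiplication with submultiplicative norm and ||1|| = 1, and an involution
   (conjugate-linear, anti-multiplicative, involutive): a unital complex
   Banach *-algebra.  (The HB hierarchy has no ready-made normed-algebra
   structure and the join of ring and normed-module structures is rejected by
   HB, so the algebra operations are bundled explicitly.) *)
Record BanachStarAlgebra (R : realType) (A : completeNormedModType (complex R)) :=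
  { mul : A -> A -> A;
    one : A;
    star : A -> A;
    mulA : forall x y z, mul x (mul y z) = mul (mul x y) z;
    mul1x : forall x, mul one x = x;
    mulx1 : forall x, mul x one = x;
    mulDl : forall x y z, mul (x + y) z = mul x z + mul y z;
    mulDr : forall x y z, mul x (y + z) = mul x y + mul x z;
    mulZl : forall (k : complex R) x y, mul (k *: x) y = k *: mul x y;
    mulZr : forall (k : complex R) x y, mul x (k *: y) = k *: mul x y;
    normM_le : forall x y, `|mul x y| <= `|x| * `|y|;
    norm_one : `|one| = 1;
    starD : forall x y, star (x + y) = star x + star y;
    starZ : forall (k : complex R) x, star (k *: x) = (k^*)%R *: star x;
    starM : forall x y, star (mul x y) = mul (star y) (star x);
    starK : forall x, star (star x) = x }.

Section Defs.
Variables (R : realType) (A : completeNormedModType (complex R))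
  (B : BanachStarAlgebra A).

Local Notation "x *a y" := (mul B x y) (at level 40, left associativity).

Definition apow (x : A) (n : nat) : A := iter n (mul B x) (one B).

(* The real norm of an element: the norm of a normed C-module is valued in
   C (real and nonnegative); we take its real part. *)
Definition nrm (x : A) : R := complex.Re `|x|.

Definition root_norm_to0 (u : nat -> A) : Prop :=
  (fun n : nat => powR (nrm (u n)) (n%:R^-1)) @ \oo --> (0 : R).

Definition quasinilpotent (x : A) : Prop := root_norm_to0 (apow x).

Definition is_gDrazin_inv (a b : A) : Prop :=
  a *a apow b 2 = b /\ a *a b = b *a a /\ quasinilpotent (a - apow a 2 *a b).

Definition gDrazin_invertible (a : A) : Prop := exists b, is_gDrazin_inv a b.

Definition is_gcEP_inv (a x : A) : Prop :=
  x = a *a apow x 2 /\ star B (a *a x) = a *a x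
  /\ root_norm_to0 (fun n => apow a n - x *a apow a n.+1).

Definition gcEP_invertible (a : A) : Prop := exists x, is_gcEP_inv a x.

Definition projection (q : A) : Prop := q = q *a q /\ q = star B q.

Definition lann (x : A) : set A := [set y | y *a x = 0].

End Defs.

(* Let x be a generalized core-EP inverse of a and p = a x.  Since
   a^n - x a^(n+1) tends to 0 faster than any geometric sequence, the constant
   (a^(n+1) - x a^(n+2)) x^(n+1) = p - x a p vanishes; hence p is a projection,
   a p = p a p and x inverts p a p on the range of p.  The products
   x^(n+1) a^n then form a Cauchy sequence, as their successive differences are
   -x^(n+1) (a^n - x a^(n+1)); their limit a^d satisfies a^d p = x, p a^d = a^d
   and a a^d = a^d a, which makes it the generalized Drazin inverse of a, with
   l(a^d) = l(p).  Conversely, if l(a^d) = l(q) for a projection q, then a^d q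
   is a generalized core-EP inverse of a.  A projection is determined by its
   left annihilator, which gives uniqueness. *)

From Pilot Require Import Defs.
From HB Require Import structures.
From mathcomp Require Import all_boot all_order all_algebra.
From mathcomp Require Import all_classical all_reals all_analysis.
From mathcomp Require Import complex.
From mathcomp Require Import ring lra.

Set Implicit Arguments.
Unset Strict Implicit.
Unset Printing Implicit Defensive.
Import Order.TTheory GRing.Theory Num.Theory.
Import numFieldNormedType.Exports.

Local Open Scope ring_scope.
Local Open Scope classical_set_scope.

Section RootNorm.
Variables (R : realType) (A : completeNormedModType (complex R)).
Implicit Types (u v : nat -> A) (y z : A).

Lemma nrmE z : `|z| = (nrm z)%:C%C.
Proof.
have /ger0_Im := normr_ge0 z; rewrite /Defs.nrm; case: `|z| => re im /= -> //.
Qed.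

Lemma nrm_ge0 z : 0 <= nrm z.
Proof. by have := normr_ge0 z; rewrite nrmE lecR. Qed.

Lemma nrmD y z : nrm (y + z) <= nrm y + nrm z.
Proof. by have := ler_normD y z; rewrite !nrmE -rmorphD lecR. Qed.

Lemma nrmN z : nrm (- z) = nrm z.
Proof. by rewrite /Defs.nrm normrN. Qed.

Lemma nrm_eq0 z : nrm z = 0 -> z = 0.
Proof. by move=> z0; apply/normr0_eq0; rewrite nrmE z0. Qed.

Lemma root_norm_to0P u : root_norm_to0 u <->
  forall e : R, 0 < e -> \forall n \near \oo, nrm (u n) <= e ^+ n.
Proof.
have n_neq0 n : (0 < n)%N -> n%:R != 0 :> R by rewrite pnatr_eq0 -lt0n.
have rootXK (t : R) n : 0 <= t -> (0 < n)%N -> (t `^ n%:R^-1) ^+ n = t.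
  move=> t0 n0; rewrite -powR_mulrn ?powR_ge0 // -powRrM mulVf ?powRr1 //.
  exact: n_neq0.
have XrootK (t : R) n : 0 <= t -> (0 < n)%N -> (t ^+ n) `^ n%:R^-1 = t.
  by move=> t0 n0; rewrite -powR_mulrn // -powRrM mulfV ?powRr1 ?n_neq0.
(* n > 0 is needed: for n = 0 the exponent [n%:R^-1] is 0. *)
split=> [/cvgrPdist_le u0 e e0 | ue].
  apply: filterS2 (u0 e e0) (nbhs_infty_gt 0) => n /=.
  rewrite sub0r normrN ger0_norm ?powR_ge0 // => root_le n0.
  rewrite -(rootXK (nrm (u n)) n (nrm_ge0 _) n0) lerXn2r ?nnegrE ?powR_ge0 //.
  exact: ltW.
apply/cvgrPdist_le => e e0.
apply: filterS2 (ue e e0) (nbhs_infty_gt 0) => n /= un n0.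
rewrite sub0r normrN ger0_norm ?powR_ge0 // -(XrootK e n (ltW e0) n0).
apply: (ge0_ler_powR _ _ _ un); rewrite ?invr_ge0 ?nnegrE ?nrm_ge0 //.
by rewrite exprn_ge0 // ltW.
Qed.

Lemma root_norm_to0_le u v (K M : R) : 0 <= K -> 0 <= M ->
  (\forall n \near \oo, nrm (v n) <= K * M ^+ n * nrm (u n)) ->
  root_norm_to0 u -> root_norm_to0 v.
Proof.
move=> K0 M0 vu /root_norm_to0P u0; apply/root_norm_to0P => e e0.
have K1 : 0 < K + 1 by rewrite ltr_wpDl.
have M1 : 0 < M + 1 by rewrite ltr_wpDl.
pose c := e / ((K + 1) * (M + 1)).
have c0 : 0 < c by rewrite divr_gt0 ?mulr_gt0.
have Mc : M * c <= e / (K + 1).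
  have -> : M * c = e / (K + 1) * (M / (M + 1)) by rewrite /c invfM; ring.
  apply: ler_piMr; first by rewrite divr_ge0 ?ltW.
  by rewrite ler_pdivrMr // mul1r lerDl.
apply: filterS3 vu (u0 c c0) (nbhs_infty_gt 0) => n /= vn un n0.
apply: (le_trans vn); rewrite -mulrA.
have -> : e ^+ n = (K + 1) ^+ n * (e / (K + 1)) ^+ n.
  by rewrite -exprMn mulrC divfK ?gt_eqF.
apply: ler_pM; rewrite ?mulr_ge0 ?exprn_ge0 ?nrm_ge0 //.
  apply: (@le_trans _ _ (K + 1)); first by rewrite lerDl.
  by apply: ler_eXnr; rewrite // lerDr.
have Mc0 : 0 <= M * c := mulr_ge0 M0 (ltW c0).
have d0 : 0 <= e / (K + 1) := divr_ge0 (ltW e0) (ltW K1).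
apply: (le_trans _ (lerXn2r n Mc0 d0 Mc)).
by rewrite exprMn ler_wpM2l ?exprn_ge0.
Qed.

Lemma root_norm_to0_cst u z : (\forall n \near \oo, u n = z) ->
  root_norm_to0 u -> z = 0.
Proof.
move=> uz /root_norm_to0P u0; apply: nrm_eq0; apply/eqP.
rewrite eq_le nrm_ge0 andbT; apply/ler_addgt0Pr => d d0; rewrite add0r.
pose c := Num.min d 1.
have c0 : 0 < c by rewrite lt_min d0 ltr01.
have c1 : c <= 1 by rewrite ge_min lexx orbT.
apply: (@filter_const _ (nbhs \oo)).
apply: filterS3 uz (u0 c c0) (nbhs_infty_gt 0) => n /= <- un n0.
apply: (le_trans un); apply: (@le_trans _ _ c); last by rewrite ge_min lexx.
by rewrite -[leRHS]expr1; apply: ler_wiXn2l => //; exact: ltW.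
Qed.

Lemma root_norm_diff_cvg u : root_norm_to0 (fun n => u n.+1 - u n) -> cvgn u.
Proof.
move=> /root_norm_to0P du.
pose h : R := 2^-1.
have h0 : 0 < h by rewrite invr_gt0 ltr0n.
have h2 : 2 * h = 1 by rewrite mulfV ?pnatr_eq0.
have [N _ duN] := du h h0.
have tail n j : (N <= n)%N ->
    nrm (u (n + j)%N - u n) <= 2 * h ^+ n - 2 * h ^+ (n + j).
  move=> Nn; elim: j => [|j IH]; first by rewrite addn0 !subrr /Defs.nrm normr0.
  have step := duN (n + j)%N (leq_trans Nn (leq_addr _ _)).
  have -> : u (n + j.+1)%N - u n =
      (u (n + j).+1 - u (n + j)%N) + (u (n + j)%N - u n).
    by rewrite addnS addrA subrK.
  rewrite addnS exprS mulrA h2 mul1r.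
  by apply: le_trans (nrmD _ _) _; lra.
apply/cauchy_cvgP/cauchy_exP => -[e im]; rewrite ltcE /= => /andP[/eqP -> e0].
have h1 : `|h| < 1 by rewrite gtr0_norm // invf_lt1 ?ltr1n ?ltr0n.
have /cvgrPdist_lt hn := cvg_expr h1.
have e20 : 0 < e / 2 by rewrite divr_gt0.
have [n /= [Nn hn_small]] := filter_ex (filterI (nbhs_infty_ge N) (hn _ e20)).
exists (u n); exists n => // m nm /=.
rewrite -ball_normE /= nrmE ltcR -nrmN opprB.
have [j ->] : exists j, m = (n + j)%N by exists (m - n)%N; rewrite subnKC.
apply: le_lt_trans (tail n j Nn) _.
move: hn_small; rewrite sub0r normrN ger0_norm ?exprn_ge0 ?ltW //.
have := exprn_ge0 (n + j) (ltW h0); lra.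
Qed.

End RootNorm.

Definition banach_ring (R : realType) (A : completeNormedModType (complex R))
  (B : BanachStarAlgebra A) : Type := A.

HB.instance Definition _ (R : realType) (A : completeNormedModType (complex R))
  (B : BanachStarAlgebra A) := GRing.Zmodule.on (banach_ring B).
HB.instance Definition _ (R : realType) (A : completeNormedModType (complex R))
  (B : BanachStarAlgebra A) := GRing.Zmodule_isPzRing.Build (banach_ring B)
  (Defs.mulA B) (Defs.mul1x B) (Defs.mulx1 B) (Defs.mulDl B) (Defs.mulDr B).

Section BanachRing.
Variables (R : realType) (A : completeNormedModType (complex R)).
Variable B : BanachStarAlgebra A.
Implicit Types (a b q u v w x : banach_ring B).

Lemma apowE x : apow B x = GRing.exp x.
Proof. by apply: funext; elim=> //= n ->; rewrite exprS. Qed.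

Lemma nrmM u v : nrm (u * v) <= nrm u * nrm v.
Proof. by have := normM_le B u v; rewrite !nrmE -rmorphM lecR. Qed.

Lemma nrmX x n : nrm (x ^+ n) <= nrm x ^+ n.
Proof.
elim: n => [|n IH]; first by rewrite /Defs.nrm norm_one.
by rewrite !exprS; apply: le_trans (nrmM _ _) _; rewrite ler_wpM2l ?nrm_ge0.
Qed.

Lemma cvg_mulLR {T : Type} {F : set_system T} {FF : Filter F} u v
    (f : T -> A) (l : A) :
  f @ F --> l -> (fun t => u * f t * v : A) @ F --> (u * l * v : A).
Proof.
move=> /cvgrPdist_le fl; apply/cvgrPdist_le => e e0.
pose K := `|u| * `|v| + 1.
have K0 : 0 < K by rewrite ltr_pwDr ?mulr_ge0.
apply: filterS (fl (e / K) (divr_gt0 e0 K0)) => t /= lft.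
(* The subtraction below is that of A: restate it in [banach_ring B] before
   using ring laws. *)
rewrite [X in `|X|](_ : _ = u * (l - f t) * v :> banach_ring B); last first.
  by rewrite mulrBr mulrBl.
apply: le_trans (normM_le B _ _) _.
apply: le_trans (ler_wpM2r (normr_ge0 v) (normM_le B _ _)) _.
rewrite mulrAC; apply: le_trans (ler_wpM2r (normr_ge0 _) (_ : _ <= K)) _.
  by rewrite lerDl.
by rewrite -ler_pdivlMl // mulrC.
Qed.

Lemma is_gcEP_invP a x : is_gcEP_inv B a x <->
  [/\ x = a * (x * x), star B (a * x) = a * x
    & root_norm_to0 (fun n => a ^+ n - x * a ^+ n.+1)].
Proof. by rewrite /is_gcEP_inv !apowE expr2; split=> [[? []] | []]. Qed.

Lemma is_gDrazin_invP a b : is_gDrazin_inv B a b <->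
  [/\ a * (b * b) = b, a * b = b * a
    & root_norm_to0 (fun n => (a - a * a * b) ^+ n)].
Proof.
by rewrite /is_gDrazin_inv /quasinilpotent !apowE !expr2; split=> [[? []] | []].
Qed.

Lemma lannE u : lann B u = [set y : banach_ring B | y * u = 0].
Proof. by []. Qed.

Lemma lann_mulr u v w : u * v = w -> lann B u `<=` lann B w.
Proof. by rewrite !lannE => <- y /= yu; rewrite mulrA yu mul0r. Qed.

Lemma idem_lann_sub q u : q * q = q -> lann B q `<=` lann B u -> q * u = u.
Proof.
move=> qq /(_ (1 - q)); rewrite !lannE /= mulrBl mul1r qq subrr => /(_ erefl).
by move/eqP; rewrite mulrBl mul1r subr_eq0 => /eqP/esym.
Qed.

Lemma projection_lann_inj (q1 q2 : banach_ring B) :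
  projection B q1 -> projection B q2 -> lann B q1 = lann B q2 -> q1 = q2.
Proof.
move=> [qq1 q1_sa] [qq2 q2_sa] l12.
have q12 : q1 * q2 = q2 by apply: idem_lann_sub (esym qq1) _; rewrite l12.
have q21 : q2 * q1 = q1 by apply: idem_lann_sub (esym qq2) _; rewrite l12.
by rewrite q1_sa -q21 Defs.starM -q1_sa -q2_sa; exact: q12.
Qed.

Section GDrazinResidue.
Variables a b : banach_ring B.
Hypotheses (ab_ba : a * b = b * a) (bab : b * a * b = b).

Lemma residue_expS n : (a - a * a * b) ^+ n.+1 = (1 - a * b) * a ^+ n.+1.
Proof.
have e_idem : (1 - a * b) * (1 - a * b) = 1 - a * b.
  by rewrite mulrBl mul1r mulrBr mulr1 -mulrA (mulrA b) bab subrr subr0.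
have e_comm : a * (1 - a * b) = (1 - a * b) * a.
  by rewrite mulrBr mulrBl mulr1 mul1r -mulrA ab_ba mulrA.
have residue : a - a * a * b = (1 - a * b) * a.
  by rewrite mulrBl mul1r -!mulrA ab_ba.
elim: n => [|n IH]; first by rewrite !expr1.
rewrite exprS IH residue -mulrA (mulrA a) e_comm -!mulrA.
by rewrite (mulrA (1 - a * b)) e_idem -exprS.
Qed.

End GDrazinResidue.

Section GcEPToGDrazin.
Variables a x p : banach_ring B.
Hypotheses (x_ax2 : x = a * (x * x))
  (a_root : root_norm_to0 (fun n => a ^+ n - x * a ^+ n.+1))
  (ax_p : a * x = p).

Let r n := a ^+ n - x * a ^+ n.+1.

Lemma a_x_exprSS n : a * x ^+ n.+2 = x ^+ n.+1.
Proof. by rewrite 2!exprS !mulrA -(mulrA a) -x_ax2. Qed.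

Lemma expr_a_x_exprS n : a ^+ n * x ^+ n.+1 = x.
Proof.
elim: n => [|n IH]; first by rewrite mul1r expr1.
by rewrite exprSr -mulrA a_x_exprSS.
Qed.

Lemma residual_exprx n : r n.+1 * x ^+ n.+1 = p - x * a * p.
Proof.
have apx : a ^+ n.+1 * x ^+ n.+1 = p by rewrite exprS -mulrA expr_a_x_exprS.
have -> : r n.+1 * x ^+ n.+1 =
    a ^+ n.+1 * x ^+ n.+1 - x * a * (a ^+ n.+1 * x ^+ n.+1).
  by rewrite /r mulrBl [a ^+ n.+2]exprS !mulrA.
by rewrite apx.
Qed.

Lemma xap : x * a * p = p.
Proof.
apply/eqP; rewrite eq_sym -subr_eq0; apply/eqP.
apply: (@root_norm_to0_cst _ _ (fun n => r n * x ^+ n)).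
  by apply: filterS (nbhs_infty_gt 0) => -[|n] // _; rewrite residual_exprx.
apply: (root_norm_to0_le (K := 1) (M := nrm x)) a_root => //.
  exact: nrm_ge0.
apply: nearW => n; rewrite mul1r mulrC.
by apply: le_trans (nrmM _ _) _; rewrite ler_wpM2l ?nrm_ge0 ?nrmX.
Qed.

Lemma xax : x * a * x = x.
Proof.
have -> : x * a * x = x * a * (a * x) * x by rewrite -!mulrA -x_ax2.
by rewrite ax_p xap -ax_p -mulrA -x_ax2.
Qed.

Lemma p_idem : p * p = p.
Proof. by rewrite -ax_p -mulrA (mulrA x) xax. Qed.

Lemma p_x : p * x = x.
Proof. by rewrite -ax_p -mulrA -x_ax2. Qed.

Lemma x_p : x * p = x.
Proof. by rewrite -ax_p mulrA xax. Qed.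

Lemma a_p : a * p = p * a * p.
Proof. by rewrite -{1}xap -ax_p !mulrA. Qed.

Lemma expr_a_p n : a ^+ n * p = p * a ^+ n * p.
Proof.
elim: n => [|n IH]; first by rewrite mulr1 mul1r p_idem.
have -> : a ^+ n.+1 * p = p * a * (p * a ^+ n * p).
  by rewrite exprS -mulrA IH !mulrA a_p.
by rewrite -IH mulrA -(mulrA p) -exprS.
Qed.

Lemma expr_x_expr_a_p n : x ^+ n * a ^+ n * p = p.
Proof.
elim: n => [|n IH]; first by rewrite !mul1r.
have -> : x ^+ n.+1 * a ^+ n.+1 * p = x ^+ n * (x * a * (a ^+ n * p)).
  by rewrite exprSr exprS !mulrA.
by rewrite expr_a_p -(mulrA p) (mulrA (x * a)) xap (mulrA p) -expr_a_p mulrA.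
Qed.

Let approx n := x ^+ n.+1 * a ^+ n.

Lemma approx_p n : approx n * p = x.
Proof.
by rewrite /approx exprS -!mulrA (mulrA (x ^+ n)) expr_x_expr_a_p x_p.
Qed.

Lemma p_approx n : p * approx n = approx n.
Proof. by rewrite /approx exprS !mulrA p_x. Qed.

Lemma a_approxS n : a * approx n.+1 = approx n * a.
Proof. by rewrite /approx mulrA a_x_exprSS [a ^+ n.+1]exprSr mulrA. Qed.

Lemma approx_diff n : approx n.+1 - approx n = - (x * (x ^+ n * r n)).
Proof. by rewrite /approx /r mulrA -exprS mulrBr opprB mulrA -exprSr. Qed.

Lemma approx_cvg : cvgn (approx : nat -> A).
Proof.
apply: root_norm_diff_cvg.
apply: (root_norm_to0_le (K := nrm x) (M := nrm x)) a_root;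
  rewrite ?nrm_ge0 //.
apply: nearW => n.
rewrite [X in nrm X](_ : _ = - (x * (x ^+ n * r n))); last exact: approx_diff.
rewrite nrmN; apply: le_trans (nrmM _ _) _.
rewrite -mulrA ler_wpM2l ?nrm_ge0 //.
exact: le_trans (nrmM _ _) (ler_wpM2r (nrm_ge0 _) (nrmX _ _)).
Qed.

Let ad : banach_ring B := limn (approx : nat -> A).

Lemma approx_mul_lim u v k :
  limn (fun n => u * approx (n + k) * v : A) = u * ad * v.
Proof.
apply: cvg_lim; first exact: norm_hausdorff.
apply: cvg_mulLR; rewrite (cvg_shiftn k (approx : nat -> A)).
exact: approx_cvg.
Qed.

Lemma approx_mul_eq u v u' v' k :
  (forall n, u * approx (n + k) * v = u' * approx n * v') ->
  u * ad * v = u' * ad * v'.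
Proof.
move=> e; rewrite -(approx_mul_lim u v k) -(approx_mul_lim u' v' 0).
by congr (lim (_ @ \oo)); apply/funext => n; rewrite addn0 e.
Qed.

Lemma ad_p : ad * p = x.
Proof.
rewrite -[ad]mul1r -(approx_mul_lim 1 p 0).
have -> : (fun n => 1 * approx (n + 0) * p : A) = fun=> x.
  by apply/funext => n; rewrite addn0 mul1r approx_p.
exact: lim_cst.
Qed.

Lemma p_ad : p * ad = ad.
Proof.
have := @approx_mul_eq p 1 1 1 0; rewrite !mulr1 mul1r; apply=> n.
by rewrite addn0 !mulr1 mul1r p_approx.
Qed.

Lemma ad_comm : a * ad = ad * a.
Proof.
have := @approx_mul_eq a 1 1 a 1; rewrite mulr1 mul1r; apply=> n.
by rewrite addn1 mulr1 mul1r a_approxS.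
Qed.

Lemma ad_ap : ad * (a * p) = p.
Proof. by rewrite a_p !mulrA ad_p xap. Qed.

Lemma ad_a_ad : ad * a * ad = ad.
Proof. by rewrite -{2}p_ad mulrA -(mulrA ad) ad_ap p_ad. Qed.

Lemma ad_residue_expS n : (a - a * a * ad) ^+ n.+1 = (1 - a * ad) * r n.+1.
Proof.
have ex : (1 - a * ad) * x = 0.
  by rewrite mulrBl mul1r -mulrA -{2}p_x (mulrA ad) ad_p -x_ax2 subrr.
by rewrite (residue_expS ad_comm ad_a_ad) /r mulrBr mulrA ex mul0r subr0.
Qed.

Lemma gcEP_gDrazin : exists2 d, is_gDrazin_inv B a d & lann B d = lann B p.
Proof.
exists ad.
  apply/is_gDrazin_invP; split; first by rewrite mulrA ad_comm ad_a_ad.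
    exact: ad_comm.
  apply: (root_norm_to0_le (K := nrm (1 - a * ad)) (M := 1)) a_root;
    rewrite ?nrm_ge0 //.
  apply: filterS (nbhs_infty_gt 0) => -[|n] // _.
  by rewrite ad_residue_expS expr1n mulr1; exact: nrmM.
apply/seteqP; split; first by apply: lann_mulr; exact: ad_ap.
by apply: lann_mulr; exact: p_ad.
Qed.

End GcEPToGDrazin.

Section GDrazinToGcEP.
Variables a b q : banach_ring B.
Hypotheses (a_bb : a * (b * b) = b) (ab_ba : a * b = b * a)
  (residue_root : root_norm_to0 (fun n => (a - a * a * b) ^+ n))
  (q_idem : q * q = q) (lann_bq : lann B b = lann B q).

Lemma gDrazin_bab : b * a * b = b.
Proof. by rewrite -ab_ba -mulrA a_bb. Qed.

Lemma q_b : q * b = b.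
Proof. by apply: idem_lann_sub q_idem _; rewrite lann_bq. Qed.

Lemma ab_q : a * b * q = q.
Proof.
have : lann B b (1 - a * b) by rewrite lannE /= mulrBl mul1r -mulrA a_bb subrr.
rewrite lann_bq lannE /= mulrBl mul1r => /eqP.
by rewrite subr_eq0 => /eqP/esym.
Qed.

Lemma q_ab : q * (a * b) = a * b.
Proof. by rewrite ab_ba mulrA q_b. Qed.

Lemma bq_ax2 : b * q = a * (b * q * (b * q)).
Proof. by rewrite -mulrA (mulrA q) q_b (mulrA b) (mulrA a) a_bb. Qed.

Lemma bqa_compl_ab : (1 - b * q * a) * (1 - a * b) = 1 - b * q * a.
Proof.
have aab : a * (a * b) = a * b * a by rewrite {1}ab_ba mulrA.
have bqaab : b * q * a * (a * b) = a * b.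
  by rewrite -mulrA aab mulrA -(mulrA b) q_ab mulrA gDrazin_bab ab_ba.
by rewrite mulrBr mulr1 mulrBl mul1r bqaab subrr subr0.
Qed.

Lemma bq_residual n :
  a ^+ n.+1 - b * q * a ^+ n.+2 = (1 - b * q * a) * (a - a * a * b) ^+ n.+1.
Proof.
rewrite (residue_expS ab_ba gDrazin_bab) (mulrA (1 - b * q * a)) bqa_compl_ab.
by rewrite mulrBl mul1r -(mulrA _ a) -exprS.
Qed.

Lemma gDrazin_gcEP : star B q = q -> is_gcEP_inv B a (b * q).
Proof.
move=> q_sa; apply/is_gcEP_invP; split; first exact: bq_ax2.
  by rewrite mulrA ab_q.
apply: (root_norm_to0_le (K := nrm (1 - b * q * a)) (M := 1)) residue_root.
- exact: nrm_ge0.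
- exact: ler01.
apply: filterS (nbhs_infty_gt 0) => -[|n] // _.
by rewrite bq_residual expr1n mulr1; exact: nrmM.
Qed.

End GDrazinToGcEP.

End BanachRing.

Unset Implicit Arguments.

Theorem corollary2p4 (R : realType) (A : completeNormedModType (complex R))
    (B : BanachStarAlgebra A) (a : A) :
  gcEP_invertible B a <->
  (gDrazin_invertible B a /\
   exists b : A, is_gDrazin_inv B a b /\
     exists! q : A, projection B q /\ lann B b = lann B q).
Proof.
split=> [[x /is_gcEP_invP [x_ax2 ax_sa a_root]] |].
  pose p := (a : banach_ring B) * x.
  have p_proj : projection B p :=
    conj (esym (p_idem x_ax2 a_root (erefl p))) (esym ax_sa).
  have [b b_gD lann_bp] := gcEP_gDrazin x_ax2 a_root (erefl p).
  split; first by exists b.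
  exists b; split=> //; exists p; split=> // q [q_proj lann_bq].
  by apply: (projection_lann_inj p_proj q_proj); rewrite -lann_bp.
move=> [_ [b [/is_gDrazin_invP [a_bb ab_ba a_root] [q [[[qq q_sa] lbq] _]]]]].
exists ((b : banach_ring B) * q).
exact: gDrazin_gcEP a_bb ab_ba a_root (esym qq) lbq (esym q_sa).
Qed.
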